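(* Let $P_3$ be the path on $3$ vertices with endpoints $u,v$, let $q\in\mathbb{R}$, and let \[ H = \begin{bmatrix} 0&1&0\\ 1&q&1\\ 0&1&0\end{bmatrix}, \] i.e. the adjacency matrix plus the potential $\mathrm{diag}(0,q,0)$. Then there is perfect state transfer from $u$ to $v$ (for the Hamiltonian $H$) if and only if there exist integers $k$ and $\ell$ of opposite parity such that \[ (k^2-\ell^2)q^2 = 8\ell^2. \] When this is the case, perfect state transfer occurs at time $t = \frac{2\pi k}{\sqrt{q^2+8}}$.
   Context: With $U(t) = e^{itH}$, perfect state transfer from $u$ to $v$ occurs at time $T$ if $|U(T)_{u,v}|=1$, and ''perfect state transfer from $u$ to $v$'' means this happens for some $T$. *)

From HB Require Import structures.
From mathcomp Require Import all_boot all_order all_algebra.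
From mathcomp Require Import all_classical all_reals.
From mathcomp Require Import topology normedtype sequences.
From mathcomp Require Import complex.
Set Implicit Arguments. Unset Strict Implicit. Unset Printing Implicit Defensive.
Import Order.TTheory GRing.Theory Num.Theory numFieldNormedType.Exports.
Local Open Scope ring_scope.
Local Open Scope complex_scope.

(* The transition matrix U(t) = e^{itH} for a real symmetric (here: real)
   matrix H, defined entrywise through the exponential series
     e^{itH} = sum_n (i t)^n / n! H^n.
   Since H and t are real, (i t)^n is real for n even ((-1)^(n/2) t^n) and
   purely imaginary for n odd (i (-1)^((n-1)/2) t^n); so the real part of the
   (a,b)-entry is the series of even terms and the imaginary part the series
   of odd terms. *)
Definition expitH_re (R : realType) (n : nat) (H : 'M[R]_n.+1) (t : R)
    (a b : 'I_n.+1) : R :=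
  limn (fun N => \sum_(0 <= k < N) ((-1) ^+ k * t ^+ (k.*2) / ((k.*2)`!)%:R
                     * (H ^+ (k.*2)) a b)).

Definition expitH_im (R : realType) (n : nat) (H : 'M[R]_n.+1) (t : R)
    (a b : 'I_n.+1) : R :=
  limn (fun N => \sum_(0 <= k < N) ((-1) ^+ k * t ^+ (k.*2.+1) / ((k.*2.+1)`!)%:R
                     * (H ^+ (k.*2.+1)) a b)).

Definition U (R : realType) (n : nat) (H : 'M[R]_n.+1) (t : R)
    (a b : 'I_n.+1) : R[i] :=
  (expitH_re H t a b) +i* (expitH_im H t a b).

Definition pst_at (R : realType) (n : nat) (H : 'M[R]_n.+1) (a b : 'I_n.+1)
    (T : R) : Prop :=
  `| U H T a b | = 1.

Definition pst (R : realType) (n : nat) (H : 'M[R]_n.+1) (a b : 'I_n.+1) : Prop :=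
  exists T : R, pst_at H a b T.

(* H = A(P_3) + diag(0,q,0); vertices 0 - 1 - 2, endpoints u = 0, v = 2 *)
Definition HP3 (R : realType) (q : R) : 'M[R]_3 :=
  \matrix_(i < 3, j < 3)
    (if (i == 1 :> nat) && (j == 1 :> nat) then q
     else if ((i == 1 :> nat) && (j != 1 :> nat)) || ((i != 1 :> nat) && (j == 1 :> nat))
          then 1 else 0).

Definition P3u : 'I_3 := @Ordinal 3 0 isT.
Definition P3v : 'I_3 := @Ordinal 3 2 isT.

From HB Require Import structures.
From mathcomp Require Import all_boot all_order all_algebra.
From mathcomp Require Import all_classical all_reals.
From mathcomp Require Import topology normedtype sequences trigo.
From mathcomp Require Import complex.
From mathcomp Require Import ring lra zify.
Import Order.TTheory GRing.Theory Num.Theory numFieldNormedType.Exports.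
Local Open Scope ring_scope.

(* The eigenvalues of [HP3 q] are 0, with eigenvector (1,0,-1), and the roots
   th1, th2 = (q +- sqrt (q^2 + 8)) / 2 of x^2 - q x - 2, with eigenvectors
   (1,th,1).  Hence U(t)_uv = -1/2 + a e^(i t th1) + b e^(i t th2) with a, b > 0
   and a + b = 1/2, so |U(t)_uv| = 1 forces e^(i t th1) = e^(i t th2) = -1:
   t th1 and t th2 are odd multiples of pi.  Their difference
   t sqrt (q^2 + 8) = 2 pi k and their sum t q = 2 pi l give integers k, l of
   opposite parity, and eliminating t yields (k^2 - l^2) q^2 = 8 l^2; the
   converse runs the same computation backwards. *)

Section PiMultiples.
Variable R : realType.
Implicit Types (x : R) (m : int).

Lemma norm_sinDpiz x m : `|sin (x + m%:~R * pi)| = `|sin x|.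
Proof.
have sinDpin (y : R) n : `|sin (y + pi *+ n)| = `|sin y|.
  by rewrite (alternatingn (@sinDpi R)) normrM normrX normrN1 expr1n mul1r.
case: m => n; first by rewrite -pmulrn mulr_natl sinDpin.
by rewrite NegzE intrN mulNr -pmulrn mulr_natl -[in RHS](subrK (pi *+ n.+1) x) sinDpin.
Qed.

Lemma sin_eq0P x : sin x = 0 <-> exists m, x = m%:~R * pi.
Proof.
split=> [sx0|[m ->]]; last first.
  by apply/normr0_eq0; rewrite -[_ * pi]add0r norm_sinDpiz sin0 normr0.
have pi_gt0 : 0 < pi :> R := pi_gt0 R.
set m := Num.floor (x / pi); exists m.
have /andP[m_le m_gt] := floor_itv (x / pi).
rewrite -/m intrD /= in m_le m_gt.
set r := x - m%:~R * pi.
have r_ge0 : 0 <= r by move: m_le; rewrite ler_pdivlMr // /r; lra.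
have r_ltpi : r < pi by move: m_gt; rewrite ltr_pdivrMr // /r; lra.
have sr0 : sin r = 0.
  by apply/normr0_eq0; rewrite -(norm_sinDpiz r m) subrK sx0 normr0.
have [r_gt0|] := ltrP 0 r.
  by have := @sin_gt0_pi _ r; rewrite r_gt0 r_ltpi sr0 ltxx => /(_ isT).
by move=> r_le0; apply/eqP; rewrite -subr_eq0 -/r eq_le r_le0 r_ge0.
Qed.

Lemma cos_eqN1P x : cos x = -1 <-> exists m, x = (2 * m%:~R + 1) * pi.
Proof.
set y := (x - pi) / 2.
have cosE : cos x = 2 * sin y ^+ 2 - 1.
  have -> : x = y *+ 2 + pi by rewrite /y; field.
  by rewrite cosDpi cos_mulr2n cos2sin2; ring.
split=> [cx|[m xE]].
  have /sin_eq0P[m ym] : sin y = 0 by apply/eqP; rewrite -sqrf_eq0; apply/eqP; lra.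
  by exists m; rewrite /y in ym; lra.
rewrite cosE; have /sin_eq0P -> : exists m', y = m'%:~R * pi.
  by exists m; rewrite /y xE; field.
by ring.
Qed.

End PiMultiples.

Lemma odd_abszP (k : int) : reflect (exists m : int, k = 2 * m + 1) (odd `|k|%N).
Proof.
by apply: (iffP idP) => [k_odd|[m ->]]; [exists (k %/ 2)%Z|]; lia.
Qed.

Lemma normc_eq1 (R : rcfType) (x y : R) : `|(x +i* y)%C| = 1 <-> x ^+ 2 + y ^+ 2 = 1.
Proof.
rewrite normc_def /=; split=> [[sqrt_eq1]|->]; last by rewrite sqrtr1.
by rewrite -(sqr_sqrtr (_ : 0 <= x ^+ 2 + y ^+ 2)) ?sqrt_eq1 ?expr1n // addr_ge0 ?sqr_ge0.
Qed.

Lemma unit_combination_norm1 (R : realFieldType) (a b c1 s1 c2 s2 : R) :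
  0 < a -> 0 < b -> a + b = 1 / 2 ->
  c1 ^+ 2 + s1 ^+ 2 = 1 -> c2 ^+ 2 + s2 ^+ 2 = 1 ->
  (a * c1 + b * c2 - 1 / 2) ^+ 2 + (a * s1 + b * s2) ^+ 2 = 1 ->
  c1 = -1 /\ c2 = -1.
Proof.
move=> a_gt0 b_gt0 ab_sum unit1 unit2 norm1.
have c1_ge : -1 <= c1 by nra.
have c2_ge : -1 <= c2 by nra.
have dot_le1 : c1 * c2 + s1 * s2 <= 1.
  by have := sqr_ge0 (c1 - c2); have := sqr_ge0 (s1 - s2); nra.
have defect : a * (1 + c1) + b * (1 + c2) + 2 * (a * b) * (1 - (c1 * c2 + s1 * s2)) = 0.
  have expand : (a * c1 + b * c2 - 1 / 2) ^+ 2 + (a * s1 + b * s2) ^+ 2 - 1 =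
      a ^+ 2 * (c1 ^+ 2 + s1 ^+ 2 - 1) + b ^+ 2 * (c2 ^+ 2 + s2 ^+ 2 - 1)
      + (a + b - 1 / 2) * (a + b + 3 / 2)
      - (a * (1 + c1) + b * (1 + c2) + 2 * (a * b) * (1 - (c1 * c2 + s1 * s2))).
    by field.
  by move: expand; rewrite norm1 unit1 unit2 ab_sum; lra.
have ac1_ge0 : 0 <= a * (1 + c1) by apply: mulr_ge0; lra.
have bc2_ge0 : 0 <= b * (1 + c2) by apply: mulr_ge0; lra.
have dot_ge0 : 0 <= 2 * (a * b) * (1 - (c1 * c2 + s1 * s2)).
  by apply: mulr_ge0; [apply: mulr_ge0 => //; apply: mulr_ge0|]; lra.
have ac1 : a * (1 + c1) = 0 by lra.
have bc2 : b * (1 + c2) = 0 by lra.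
by split; nra.
Qed.

Definition P3c : 'I_3 := @Ordinal 3 1 isT.

Lemma mul_mx3E (R : pzRingType) (A B : 'M[R]_3) i j :
  (A * B) i j = A i P3u * B P3u j + A i P3c * B P3c j + A i P3v * B P3v j.
Proof.
rewrite [LHS]mxE !big_ord_recr big_ord0 /= add0r.
by congr (_ * _ + _ * _ + _ * _); congr (_ _ _); apply/val_inj.
Qed.

(* [a] and [b] are the (u,v)-entries of the spectral projections of [HP3 q]
   onto the eigenvalues [th1] and [th2]; the eigenvalue 0 contributes -1/2. *)
Section HP3Spectral.
Context {R : realType} {q a b th1 th2 : R}.
Hypotheses (th1_root : th1 ^+ 2 = q * th1 + 2) (th2_root : th2 ^+ 2 = q * th2 + 2).
Hypotheses (ab_sum : a + b = 1 / 2) (ab_orth : a * th1 + b * th2 = 0).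

Lemma HP3X_col_v n :
  (HP3 q ^+ n) P3u P3v = a * th1 ^+ n + b * th2 ^+ n - (n == 0)%:R / 2 /\
  (HP3 q ^+ n) P3c P3v = a * th1 ^+ n.+1 + b * th2 ^+ n.+1 /\
  (HP3 q ^+ n) P3v P3v = a * th1 ^+ n + b * th2 ^+ n + (n == 0)%:R / 2.
Proof.
have rootX th k : th ^+ 2 = q * th + 2 -> th ^+ k.+2 = q * th ^+ k.+1 + 2 * th ^+ k.
  by move=> th_root; rewrite -addn2 exprD th_root exprSr; ring.
elim: n => [|n [IHu [IHc IHv]]].
  by rewrite !mxE /= !expr0 !expr1 !mulr1 ab_sum ab_orth; split; [|split]; field.
rewrite (exprS (HP3 q) n) !mul_mx3E IHu IHc IHv !mxE /= (rootX th1) // (rootX th2) //.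
by split; [|split]; field.
Qed.

Lemma expitH_re_HP3 t :
  expitH_re (HP3 q) t P3u P3v = a * cos (t * th1) + b * cos (t * th2) - 1 / 2.
Proof.
have termE k : (-1) ^+ k * t ^+ k.*2 / (k.*2)`!%:R * (HP3 q ^+ k.*2) P3u P3v =
    a * cos_coeff' (t * th1) k + b * cos_coeff' (t * th2) k - (k == 0)%:R / 2.
  rewrite (HP3X_col_v k.*2).1 /cos_coeff' !exprMn.
  rewrite /exprz; case: k => [|k] /=; rewrite ?expr0 ?mul0r ?subr0 ?divr1; ring.
apply: cvg_lim => //; rewrite -cvg_shiftS.
under eq_fun => N.
  under eq_bigr do rewrite termE.
  rewrite sumrB big_split /= -!mulr_sumr big_nat_recl //= mul0r big1_eq addr0.
  over.
have cvg_cos th :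
    (\sum_(0 <= i < n.+1) cos_coeff' (t * th) i @[n --> \oo] --> cos (t * th))%classic.
  by have := @cvg_cos_coeff' _ (t * th); rewrite -cvg_shiftS.
apply: cvgB; last exact: cvg_cst.
by apply: cvgD; apply: cvgM; first [exact: cvg_cst | exact: cvg_cos].
Qed.

Lemma expitH_im_HP3 t :
  expitH_im (HP3 q) t P3u P3v = a * sin (t * th1) + b * sin (t * th2).
Proof.
have termE k : (-1) ^+ k * t ^+ k.*2.+1 / (k.*2.+1)`!%:R * (HP3 q ^+ k.*2.+1) P3u P3v =
    a * sin_coeff' (t * th1) k + b * sin_coeff' (t * th2) k.
  by rewrite (HP3X_col_v k.*2.+1).1 /sin_coeff' /exprz !exprMn /= mul0r subr0; ring.
apply: cvg_lim => //.
under eq_fun => N.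
  under eq_bigr do rewrite termE.
  rewrite big_split /= -!mulr_sumr.
  over.
by apply: cvgD; apply: cvgM; first [exact: cvg_cst | exact: cvg_sin_coeff'].
Qed.

End HP3Spectral.

Section PSTOnP3.
Variables (R : realType) (q : R).
Local Notation s := (Num.sqrt (q ^+ 2 + 8)).

Lemma sqr_sqrt_q2D8 : s ^+ 2 = q ^+ 2 + 8.
Proof. by rewrite sqr_sqrtr // addr_ge0 ?sqr_ge0. Qed.

Lemma sqrt_q2D8_gt0 : 0 < s.
Proof. by rewrite sqrtr_gt0 ltr_wpDl ?sqr_ge0. Qed.

Lemma pst_at_HP3P t : pst_at (HP3 q) P3u P3v t <->
  cos (t * ((q + s) / 2)) = -1 /\ cos (t * ((q - s) / 2)) = -1.
Proof.
have s_gt0 := sqrt_q2D8_gt0; have s_sqr := sqr_sqrt_q2D8.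
set th1 := (q + s) / 2; set th2 := (q - s) / 2.
have th1_root : th1 ^+ 2 = q * th1 + 2 by rewrite /th1; nra.
have th2_root : th2 ^+ 2 = q * th2 + 2 by rewrite /th2; nra.
set a := - th2 / (2 * s); set b := th1 / (2 * s).
have ab_sum : a + b = 1 / 2 by rewrite /a /b /th1 /th2; field; rewrite gt_eqF.
have ab_orth : a * th1 + b * th2 = 0 by rewrite /a /b; field; rewrite gt_eqF.
have a_gt0 : 0 < a by rewrite /a /th2 divr_gt0 //; nra.
have b_gt0 : 0 < b by rewrite /b /th1 divr_gt0 //; nra.
rewrite /pst_at /U (expitH_re_HP3 th1_root th2_root ab_sum ab_orth)
  (expitH_im_HP3 th1_root th2_root ab_sum ab_orth) normc_eq1.
split=> [|[cos1 cos2]].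
  by apply: unit_combination_norm1 => //; exact: cos2Dsin2.
have sin1 : sin (t * th1) = 0 by apply: cos1sin0; rewrite cos1 normrN1.
have sin2 : sin (t * th2) = 0 by apply: cos1sin0; rewrite cos2 normrN1.
rewrite cos1 cos2 sin1 sin2 !mulr0 addr0 expr0n addr0.
have -> : a * -1 + b * -1 - 1 / 2 = -1 by lra.
by rewrite sqrrN expr1n.
Qed.

Lemma pst_at_HP3_solution t : pst_at (HP3 q) P3u P3v t ->
  exists k l : int, odd `|k|%N != odd `|l|%N /\
    (k%:~R ^+ 2 - l%:~R ^+ 2) * q ^+ 2 = 8 * l%:~R ^+ 2.
Proof.
case/pst_at_HP3P => /cos_eqN1P[m tth1] /cos_eqN1P[n tth2].
exists (m - n), (m + n + 1); split; first by lia.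
rewrite !(intrD, intrN) /=.
set K := m%:~R - n%:~R; set L := m%:~R + n%:~R + 1.
have t_s : t * s = 2 * pi * K by rewrite /K; lra.
have t_q : t * q = 2 * pi * L by rewrite /L; lra.
have : (2 * pi) ^+ 2 * ((K ^+ 2 - L ^+ 2) * q ^+ 2 - 8 * L ^+ 2) = 0.
  transitivity (((t * s) ^+ 2 - (t * q) ^+ 2) * q ^+ 2 - 8 * (t * q) ^+ 2).
    by rewrite t_s t_q; ring.
  by rewrite exprMn sqr_sqrt_q2D8; ring.
have pi2_neq0 : (2 * pi) ^+ 2 != 0 :> R.
  by rewrite expf_neq0 // mulf_neq0 // gt_eqF // pi_gt0.
by move/eqP; rewrite mulf_eq0 (negPf pi2_neq0) subr_eq0 => /eqP.
Qed.

Lemma pst_at_HP3_time (k l : int) : odd `|k|%N != odd `|l|%N ->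
  (k%:~R ^+ 2 - l%:~R ^+ 2) * q ^+ 2 = 8 * l%:~R ^+ 2 ->
  pst_at (HP3 q) P3u P3v (2 * pi * k%:~R / s).
Proof.
move=> kl_par kl_eq; apply/pst_at_HP3P.
have s_neq0 : s != 0 by rewrite gt_eqF ?sqrt_q2D8_gt0.
have [l' [kq_l's l'_abs]] : exists l' : int, k%:~R * q = l'%:~R * s /\ `|l'|%N = `|l|%N.
  have : (k%:~R * q - l%:~R * s) * (k%:~R * q + l%:~R * s) = 0.
    by rewrite -subr_sqr !exprMn sqr_sqrt_q2D8; lra.
  move/eqP; rewrite mulf_eq0 => /orP[|] /eqP kq_ls.
    by exists l; split => //; lra.
  by exists (- l); rewrite abszN intrN; split => //; lra.
have /odd_abszP[m km] : odd `|(k + l')%R|%N by lia.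
have /odd_abszP[n kn] : odd `|(l' - k)%R|%N by lia.
split; apply/cos_eqN1P; [exists m|exists n].
- have -> : 2 * pi * k%:~R / s * ((q + s) / 2) = (k + l')%:~R * pi.
    by rewrite intrD -[l'%:~R](mulfK s_neq0) -kq_l's; field.
  by rewrite km intrD intrM.
- have -> : 2 * pi * k%:~R / s * ((q - s) / 2) = (l' - k)%:~R * pi.
    by rewrite intrB -[l'%:~R](mulfK s_neq0) -kq_l's; field.
  by rewrite kn intrD intrM.
Qed.

End PSTOnP3.

Theorem theorem3 (R : realType) (q : R) :
  (pst (HP3 q) P3u P3v <->
   exists k l : int, odd `|k|%N != odd `|l|%N /\
     (k%:~R ^+ 2 - l%:~R ^+ 2) * q ^+ 2 = 8 * l%:~R ^+ 2)
  /\
  (forall k l : int, odd `|k|%N != odd `|l|%N ->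
     (k%:~R ^+ 2 - l%:~R ^+ 2) * q ^+ 2 = 8 * l%:~R ^+ 2 ->
     pst_at (HP3 q) P3u P3v (2 * pi * k%:~R / Num.sqrt (q ^+ 2 + 8))).
Proof.
split; last exact: pst_at_HP3_time.
split=> [[t /pst_at_HP3_solution]//|[k [l [kl_par kl_eq]]]].
by eexists; exact: pst_at_HP3_time kl_par kl_eq.
Qed.
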